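(* Let $D$ be a 2-connected rooted digraph with root $r$. Then there exists an $r-r$ numbering of $D$, that is, a linear ordering $\sigma$ of $V(D)\setminus\{r\}$ such that for every vertex $x\neq r$, either $x$ is an outneighbour of $r$, or there exist two in-neighbours $u$ and $v$ of $x$ with $\sigma(u)<\sigma(x)<\sigma(v)$.
   Context: A rooted digraph is a loopless digraph $D$ with a distinguished vertex $r$ (the root) such that: there is no arc $(u,r)$ for any $u\in V(D)$; there is no arc $(x,y)$ with $x\neq r$ and $y$ an outneighbour of $r$; and $r$ has outdegree at least 2. A cut of a rooted digraph $D$ is a set $S\subseteq V(D)\setminus\{r\}$ such that some vertex $z\notin S$ is not the endpoint of any directed path starting at $r$ in $D-S$. $D$ is 2-connected if it has no cut of size at most 1 (in particular, the empty set is not a cut, so every vertex is reachable from $r$). *)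

From mathcomp Require Import all_boot.
Set Implicit Arguments. Unset Strict Implicit. Unset Printing Implicit Defensive.

Definition rooted_digraph (V : finType) (e : rel V) (r : V) : Prop :=
  [/\ (forall x, ~~ e x x),
      (forall u, ~~ e u r),
      (forall x y, x != r -> e r y -> ~~ e x y)
    & 2 <= #|[set y | e r y]|].

Definition del_rel (V : finType) (e : rel V) (S : {set V}) : rel V :=
  [rel x y | [&& e x y, x \notin S & y \notin S]].

Definition is_cut (V : finType) (e : rel V) (r : V) (S : {set V}) : Prop :=
  r \notin S /\ exists z, z \notin S /\ ~~ connect (del_rel e S) r z.

Definition two_connected (V : finType) (e : rel V) (r : V) : Prop :=
  forall S : {set V}, #|S| <= 1 -> ~ is_cut e r S.

(* An r-r numbering: sigma is a linear ordering of V \ {r} (an injective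
   map into nat restricted to vertices other than r) such that every x <> r
   is an outneighbour of r or has in-neighbours u, v with
   sigma u < sigma x < sigma v. *)
Definition rr_numbering (V : finType) (e : rel V) (r : V) (sigma : V -> nat) : Prop :=
  (forall x y, x != r -> y != r -> sigma x = sigma y -> x = y) /\
  forall x, x != r ->
    e r x \/ exists u v, [/\ u != r, v != r, e u x, e v x &
                            sigma u < sigma x < sigma v].

From mathcomp Require Import all_boot zify.
Set Implicit Arguments. Unset Strict Implicit. Unset Printing Implicit Defensive.

(* Induction on the number of vertices x <> r that are not out-neighbours of r.
   If there is such a vertex, there is an arc a -> w with a an out-neighbour of
   r and w not one; choose it so that the set of vertices unreachable from r in
   D - {a, w} is minimal. That set is empty: a path from r to an unreachable z
   avoiding w must leave the reachable part through an arc a -> z1, and z1 in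
   place of w gives a strictly smaller set, since w is reached in D - {a, z1}
   through one of its other in-neighbours. Handing the out-arcs of w over to a
   and attaching w directly to r keeps the digraph rooted and 2-connected, and
   a numbering of the new digraph becomes one of D after inserting w right next
   to a, on the side opposite to another in-neighbour u of w. *)

Lemma triple_ltn (p q c d : nat) : c <= 2 -> d <= 2 -> p < q -> 3 * p + c < 3 * q + d.
Proof. lia. Qed.

Lemma triple_inj (p q c d : nat) : c <= 2 -> d <= 2 -> 3 * p + c = 3 * q + d -> p = q /\ c = d.
Proof. lia. Qed.

Section Connect.
Variable T : finType.
Implicit Type e : rel T.

Lemma connect_closed_pred e (P : pred T) x y :
  P x -> (forall u v, P u -> e u v -> P v) -> connect e x y -> P y.
Proof.
move=> Px closedP /connectP [p + ->]; elim: p x Px => //= v p IH x Px /andP[exv].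
exact: IH (closedP _ _ Px exv).
Qed.

Lemma connect_exit e (P : pred T) x y :
  P x -> ~~ P y -> connect e x y -> exists u v, [/\ P u, ~~ P v & e u v].
Proof.
move=> Px nPy cxy.
suff /existsP[u /existsP[v /and3P[]]] : [exists u, exists v, [&& P u, ~~ P v & e u v]].
  by exists u, v.
move: nPy; apply: contraNT => /existsPn noexit.
apply: connect_closed_pred Px _ cxy => u v Pu euv; apply/negPn/negP => nPv.
by move/existsPn: (noexit u) => /(_ v); rewrite Pu nPv euv.
Qed.

Lemma connect_del_notin e (S : {set T}) x y :
  x \notin S -> connect (del_rel e S) x y -> y \notin S.
Proof.
move=> xS; apply: (connect_closed_pred (P := [pred v | v \notin S]) xS).
by move=> u v _ /and3P[].
Qed.

Lemma connect_del_step e (S : {set T}) x u v : x \notin S ->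
  connect (del_rel e S) x u -> e u v -> v \notin S -> connect (del_rel e S) x v.
Proof.
move=> xS cxu euv vS; have uS := connect_del_notin xS cxu.
by apply: connect_trans cxu (connect1 _); rewrite /del_rel /= euv uS vS.
Qed.

End Connect.

Section Rooted.
Variables (V : finType) (e : rel V) (r : V).

Definition far : {set V} := [set y | (y != r) && ~~ e r y].

Definition reach_off (a w v : V) := connect (del_rel e [set a; w]) r v.

Definition unreached (a w : V) : {set V} :=
  [set z | [&& z != a, z != w & ~~ reach_off a w z]].

Lemma reach_off_retarget a w z v :
  ~~ reach_off a w z -> reach_off a w v -> reach_off a z v.
Proof.
move=> nRz Rv.
suff /andP[] : reach_off a w v && reach_off a z v by [].
apply: (connect_closed_pred (P := fun v => reach_off a w v && reach_off a z v)) Rv.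
  by rewrite /reach_off !connect0.
move=> u x /andP[Ru Ru'] arc; have Rx : reach_off a w x := connect_trans Ru (connect1 arc).
rewrite Rx; apply: connect_trans Ru' (connect1 _).
move: arc => /and3P[eux]; rewrite !inE !negb_or => /andP[ua _] /andP[xa _].
rewrite /del_rel /= eux !inE !negb_or ua xa /=.
by apply/andP; split; apply: contraNneq nRz => <-.
Qed.

Hypothesis hr : rooted_digraph e r.

Lemma arc_neq x y : e x y -> x != y.
Proof. by case: hr => loopless _ _ _ exy; apply: contraTneq exy => ->. Qed.

Lemma arc_target_neq_root x y : e x y -> y != r.
Proof. by case: hr => _ no_in _ _ exy; apply: contraTneq exy => ->. Qed.

Lemma root_notin_pair a w : e r a -> e a w -> r \notin [set a; w].
Proof.
move=> era eaw; rewrite !inE negb_or (arc_neq era) eq_sym.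
exact: arc_target_neq_root eaw.
Qed.

Hypothesis h2 : two_connected e r.

Lemma two_connected_reach (S : {set V}) z :
  #|S| <= 1 -> r \notin S -> z \notin S -> connect (del_rel e S) r z.
Proof.
by move=> S1 rS zS; apply/negPn/negP => nc; apply: (h2 S1); split=> //; exists z.
Qed.

Lemma reach_off_in_arc a w : e r a -> e a w -> exists2 u, reach_off a w u & e u w.
Proof.
move=> era eaw; have rS := root_notin_pair era eaw.
have cw : connect (del_rel e [set a]) r w.
  by apply: two_connected_reach; rewrite ?cards1 // inE ?(arc_neq era) // eq_sym arc_neq.
have nRw : ~~ reach_off a w w.
  by apply/negP => /(connect_del_notin rS); rewrite !inE eqxx orbT.
have [u [v [Ru nRv /and3P[euv _]]]] :=
  connect_exit (P := reach_off a w) (connect0 _ r) nRw cw.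
rewrite inE => va; have [vw|vw] := eqVneq v w; first by exists u; rewrite // -vw.
by move: nRv; rewrite /reach_off (connect_del_step rS Ru euv) // !inE negb_or va.
Qed.

Lemma unreached_out a w z0 : e r a -> e a w ->
  z0 \in unreached a w -> exists2 z, e a z & z \in unreached a w.
Proof.
move=> era eaw; rewrite inE => /and3P[z0a z0w nRz0].
have rS := root_notin_pair era eaw.
have cz0 : connect (del_rel e [set w]) r z0.
  by apply: two_connected_reach; rewrite ?cards1 // inE // eq_sym (arc_target_neq_root eaw).
have Pr : reach_off a w r || (r == a) by rewrite /reach_off connect0.
have nPz0 : ~~ (reach_off a w z0 || (z0 == a)) by rewrite negb_or nRz0.
have [u [v [Pu nPv /and3P[euv _]]]] :=
  connect_exit (P := fun v => reach_off a w v || (v == a)) Pr nPz0 cz0.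
rewrite inE => vw; move: nPv; rewrite negb_or => /andP[nRv va].
case/orP: Pu => [Ru | /eqP ua].
  by move: nRv; rewrite /reach_off (connect_del_step rS Ru euv) // !inE negb_or va.
by exists v; [rewrite -ua | rewrite inE va vw].
Qed.

Lemma unreached_not_out a w z : e r a -> e a w -> z \in unreached a w -> ~~ e r z.
Proof.
move=> era eaw; rewrite inE => /and3P[za zw]; apply: contra => erz.
by apply: connect1; rewrite /del_rel /= erz (root_notin_pair era eaw) !inE negb_or za zw.
Qed.

Lemma unreached_proper a w z : e r a -> e a w -> z \in unreached a w ->
  unreached a z \proper unreached a w.
Proof.
move=> era eaw zU; have := zU; rewrite inE => /and3P[_ zw nRz].
have [u Ru euw] := reach_off_in_arc era eaw.
have Rzw : reach_off a z w.
  have := connect_del_notin (root_notin_pair era eaw) Ru; rewrite !inE negb_or => /andP[ua _].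
  have uz : u != z by apply: contraNneq nRz => <-.
  apply: connect_trans (reach_off_retarget nRz Ru) (connect1 _).
  by rewrite /del_rel /= euw !inE !negb_or ua uz (eq_sym w a) (arc_neq eaw) (eq_sym w z).
apply/properP; split; last by exists z => //; rewrite inE eqxx /= andbF.
apply/subsetP => y; rewrite !inE => /and3P[ya yz nRy]; rewrite ya /=.
have -> : y != w by apply: contraNneq nRy => ->.
by move: nRy; apply: contra; apply: reach_off_retarget.
Qed.

Lemma far_out_arc y : y \in far -> exists a w, [/\ e r a, e a w & ~~ e r w].
Proof.
rewrite inE => /andP[yr nry].
have cy : connect (del_rel e set0) r y by apply: two_connected_reach; rewrite ?cards0 ?inE.
have Pr : (r == r) || e r r by rewrite eqxx.
have nPy : ~~ ((y == r) || e r y) by rewrite negb_or yr.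
have [u [v [Pu nPv /and3P[euv _ _]]]] :=
  connect_exit (P := fun v => (v == r) || e r v) Pr nPy cy.
move: nPv; rewrite negb_or => /andP[_ nrv].
case/orP: Pu => [/eqP ur | eru]; last by exists u, v.
by move: euv; rewrite ur (negbTE nrv).
Qed.

Lemma good_pair y : y \in far -> exists a w,
  [/\ e r a, e a w, ~~ e r w & forall z, z != a -> z != w -> reach_off a w z].
Proof.
move=> yfar; have [a0 [w0 [era0 eaw0 nrw0]]] := far_out_arc yfar.
pose ok (p : V * V) := [&& e r p.1, e p.1 p.2 & ~~ e r p.2].
have ok0 : ok (a0, w0) by rewrite /ok /= era0 eaw0.
case: (arg_minnP (fun p => #|unreached p.1 p.2|) ok0) => [[a w]] /and3P[/= era eaw nrw] minU.
exists a, w; split=> // z za zw; apply/negPn/negP => nRz.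
have zU : z \in unreached a w by rewrite inE za zw nRz.
have [z1 eaz1 z1U] := unreached_out era eaw zU.
have := minU (a, z1); rewrite /ok /= era eaz1 (unreached_not_out era eaw z1U) => /(_ isT).
by rewrite leqNgt (proper_card (unreached_proper era eaw z1U)).
Qed.

End Rooted.

Section Reroute.
Variables (V : finType) (e : rel V) (r a w : V).

(* The out-arcs of w are handed over to a, and w becomes a leaf below r. *)
Definition reroute : rel V := fun x y =>
  ((y != w) && (x != w) && (e x y || (x == a) && e w y)) || ((x == r) && (y == w)).

Hypotheses (hr : rooted_digraph e r) (era : e r a) (eaw : e a w) (nrw : ~~ e r w).

Let ar : a != r := arc_target_neq_root hr era.
Let wr : w != r := arc_target_neq_root hr eaw.
Let aw : a != w := arc_neq hr eaw.
Let nwa : ~~ e w a. Proof. by case: hr => _ _ no_in _; apply: no_in. Qed.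

Lemma reroute_root y : reroute r y = e r y || (y == w).
Proof.
rewrite /reroute eqxx (eq_sym r a) (negbTE ar) (eq_sym r w) wr /= andbT orbF.
by have [->|] := eqVneq y w; rewrite ?(negbTE nrw).
Qed.

Lemma reroute_rooted : rooted_digraph reroute r.
Proof.
case: hr => loopless no_in root_out_in out2; split.
- move=> x; rewrite /reroute negb_or (negbTE (loopless x)) /=; apply/andP; split.
    by have [->|_] := eqVneq x a; rewrite ?(negbTE nwa) /= ?andbF.
  by apply: contraNN wr => /andP[/eqP-> /eqP->].
- move=> u; rewrite /reroute negb_or (negbTE (no_in u)) (negbTE (no_in w)) andbF /=.
  by rewrite andbF (eq_sym r w) (negbTE wr) andbF.
- move=> x y xr; rewrite reroute_root => /orP[ery|/eqP->]; last by rewrite /reroute eqxx andbT.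
  by rewrite /reroute (negbTE (root_out_in _ _ xr ery)) (negbTE (root_out_in _ _ wr ery))
    (negbTE xr) !andbF.
- apply: leq_trans out2 (subset_leq_card _).
  by apply/subsetP => y; rewrite !inE reroute_root => ->.
Qed.

Lemma far_reroute : #|far reroute r| < #|far e r|.
Proof.
apply: proper_card; apply/properP; split.
  by apply/subsetP => y; rewrite !inE reroute_root negb_or => /andP[-> /andP[->]].
by exists w; rewrite !inE ?reroute_root ?eqxx ?orbT ?andbF ?wr.
Qed.

Lemma reroute_two_connected : two_connected e r ->
  (forall z, z != a -> z != w -> reach_off e r a w z) -> two_connected reroute r.
Proof.
move=> h2 reach S S1 [rS [z [zS nc]]]; apply: (negP nc).
have [zw|zw] := eqVneq z w.
  by subst z; apply: connect1; rewrite /del_rel /= reroute_root eqxx orbT rS zS.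
have [aS|aS] := boolP (a \in S).
  have defS : S = [set a] by apply/eqP; rewrite eq_sym eqEcard sub1set aS cards1 S1.
  rewrite defS inE in zS *.
  apply: connect_sub (reach z zS zw) => u v /and3P[euv].
  rewrite !inE !negb_or => /andP[ua uw] /andP[va vw].
  by apply: connect1; rewrite /del_rel /= /reroute euv uw vw !inE ua va.
suff /orP[//|/eqP zw'] : connect (del_rel reroute S) r z || (z == w).
  by rewrite zw' eqxx in zw.
apply: (connect_closed_pred (P := fun v => connect (del_rel reroute S) r v || (v == w)))
  (two_connected_reach h2 S1 rS zS); first by rewrite connect0.
move=> u v Pu /and3P[euv uS vS]; have [->|vw] := eqVneq v w; first by rewrite orbT.
rewrite orbF; have [uw|uw] := eqVneq u w.
  apply: (connect_trans (y := a)); apply: connect1; rewrite /del_rel /=.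
    by rewrite reroute_root era rS aS.
  by rewrite /reroute vw aw eqxx -uw euv orbT aS vS.
move: Pu; rewrite (negbTE uw) orbF => Ru.
by apply: connect_trans Ru (connect1 _); rewrite /del_rel /= /reroute vw uw euv uS vS.
Qed.

(* From a numbering s of the rerouted digraph: spacing by 3 leaves room to put
   w immediately below a if u precedes a, and immediately above a otherwise. *)
Definition insert_next (s : V -> nat) (u x : V) : nat :=
  if x == w then 3 * s a + (if s u < s a then 0 else 2) else 3 * s x + 1.

Lemma reroute_in_arc_lift s u x t : x != w -> ~~ e r x -> reroute t x ->
  exists t', [/\ t' != r, e t' x,
    s t < s x -> insert_next s u t' < insert_next s u x &
    s x < s t -> insert_next s u x < insert_next s u t'].
Proof.
move=> xw nrx; rewrite /reroute (negbTE xw) /= andbF orbF.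
rewrite /insert_next (negbTE xw); case/andP=> tw /orP[etx | /andP[/eqP-> ewx]].
  exists t; rewrite (negbTE tw).
  by split=> //; [apply: contraNneq nrx => <- | exact: triple_ltn | exact: triple_ltn].
exists w; rewrite eqxx; have c2 : (if s u < s a then 0 else 2) <= 2 by case: ifP.
by split=> // lt; apply: triple_ltn.
Qed.

Lemma rr_numbering_reroute s : two_connected e r -> rr_numbering reroute r s ->
  exists sigma, rr_numbering e r sigma.
Proof.
move=> h2 [s_inj s_cover].
have [u Ru euw] := reach_off_in_arc hr h2 era eaw.
have /andP[ua uw] : (u != a) && (u != w).
  by have := connect_del_notin (root_notin_pair hr era eaw) Ru; rewrite !inE negb_or.
have ur : u != r by apply: contraNneq nrw => <-.
have sua : s u != s a by apply: contra_neq ua; apply: s_inj.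
exists (insert_next s u); split.
  move=> x y xr yr; rewrite /insert_next.
  have c2 : (if s u < s a then 0 else 2) <= 2 by case: ifP.
  have c1 : (if s u < s a then 0 else 2) != 1 by case: ifP.
  have [->|xw] := eqVneq x w; have [->|yw] := eqVneq y w => // eq_s.
  - by have [_ c] := triple_inj c2 (leqnSn 1) eq_s; rewrite c eqxx in c1.
  - by have [_ c] := triple_inj (leqnSn 1) c2 eq_s; rewrite -c eqxx in c1.
  - exact: s_inj xr yr (triple_inj (leqnSn 1) (leqnSn 1) eq_s).1.
move=> x xr; have [erx|nrx] := boolP (e r x); [by left | right].
have [->|xw] := eqVneq x w.
  have iu : insert_next s u u = 3 * s u + 1 by rewrite /insert_next (negbTE uw).
  have ia : insert_next s u a = 3 * s a + 1 by rewrite /insert_next (negbTE aw).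
  have iw : insert_next s u w = 3 * s a + (if s u < s a then 0 else 2).
    by rewrite /insert_next eqxx.
  case: ltngtP sua iw => // cmp _ iw; [exists u, a | exists a, u]; rewrite iu ia iw.
    by split=> //; rewrite (triple_ltn _ _ cmp) // addn0 addn1 ltnSn.
  by split=> //; rewrite ltn_add2l (triple_ltn _ _ cmp).
have [|[t1 [t2 [_ _ et1 et2 /andP[lt1 lt2]]]]] := s_cover x xr.
  by rewrite reroute_root (negbTE nrx) (negbTE xw).
have [t1' [t1r e1 h1 _]] := reroute_in_arc_lift s u xw nrx et1.
have [t2' [t2r e2 _ h2']] := reroute_in_arc_lift s u xw nrx et2.
by exists t1', t2'; split; rewrite ?h1 ?h2'.
Qed.

End Reroute.

Lemma rr_numbering_far0 (V : finType) (e : rel V) (r : V) :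
  far e r = set0 -> exists sigma, rr_numbering e r sigma.
Proof.
move=> far0; exists (fun x => enum_rank x : nat); split.
  by move=> x y _ _ /ord_inj/enum_rank_inj.
move=> x xr; left; have : x \notin far e r by rewrite far0 inE.
by rewrite inE xr negbK.
Qed.

Theorem lemma1 (V : finType) (e : rel V) (r : V) :
  rooted_digraph e r -> two_connected e r ->
  exists sigma : V -> nat, rr_numbering e r sigma.
Proof.
move=> hr h2; have [n] := ubnP #|far e r|; elim: n e hr h2 => // n IH e hr h2 far_n.
have [far0|[y yfar]] := set_0Vmem (far e r); first exact: rr_numbering_far0.
have [a [w [era eaw nrw reach]]] := good_pair hr h2 yfar.
have [|s hs] := IH (reroute e r a w) (reroute_rooted hr era eaw nrw)
                   (reroute_two_connected hr era eaw nrw h2 reach).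
  exact: leq_trans (far_reroute hr era eaw nrw) _.
exact: rr_numbering_reroute hs.
Qed.
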